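(* Let $1\le D\le K-1$ and let $\mathbf{L}$ be the $(K,D)$ AIR matrix. Let $i\in[0:\lceil l/2\rceil]$, let $k\in C_i$, and let $k_R=k-(K-D-\lambda_{2i-1})$. If $\lambda_{2i}>0$, write $k_R=c\lambda_{2i}+d$ with integers $c\ge0$ and $0\le d<\lambda_{2i}$; then the down-distance of $\mathbf{L}(k,k)$ is $$d_{down}(k)=D+\lambda_{2i+1}+(\beta_{2i}-1-c)\lambda_{2i}.$$ If $\lambda_{2i}=0$ (which happens exactly when $l$ is odd and $i=\lceil l/2\rceil$), then $d_{down}(k)=D$.
   Context: Notation: $[a:b]=\{a,\dots,b\}$. Let $K,D$ be integers with $1\le D\le K-1$. Define $\lambda_{-1}=K-D$, $\lambda_0=D$ and recursively, by Euclidean division, $\lambda_{i-1}=\beta_i\lambda_i+\lambda_{i+1}$ with $0\le\lambda_{i+1}<\lambda_i$, for $i=0,1,2,\dots$, stopping at the index $l\ge 0$ with $\lambda_{l+1}=0$; $\beta_0\ge0$ may be $0$, $\beta_i\ge1$ for $i\ge1$. Set $\lambda_j=0$ and $\beta_j=0$ for $j>l$. For $n\mid m$, $\mathbf{I}_{m\times n}$ is $m/n$ copies of the $n\times n$ identity stacked vertically and $\mathbf{I}_{n\times m}$ its transpose. The $(K,D)$ AIR matrix $\mathbf{L}$ is the $K\times(K-D)$ $0/1$ matrix (rows $[0:K-1]$, columns $[0:K-D-1]$) that is zero except in the blocks: the $(K-D)\times(K-D)$ identity in rows and columns $[0:K-D-1]$; for $0\le 2i\le l$, the even submatrix $\mathbf{I}_{\lambda_{2i}\times\beta_{2i}\lambda_{2i}}$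 in rows $[K-\lambda_{2i}:K-1]$, columns $[K-D-\lambda_{2i-1}:K-D-\lambda_{2i+1}-1]$ (absent if $i=0,\beta_0=0$); for $1\le 2i+1\le l$, the odd submatrix $\mathbf{I}_{\beta_{2i+1}\lambda_{2i+1}\times\lambda_{2i+1}}$ in rows $[K-\lambda_{2i}:K-\lambda_{2i+2}-1]$, columns $[K-D-\lambda_{2i+1}:K-D-1]$. Column intervals: $C_i=[K-D-\lambda_{2i-1}:K-D-\lambda_{2i+1}-1]$, $0\le i\le\lceil l/2\rceil$. Down-distance: for $k\in[0:K-D-1]$ (where $\mathbf{L}(k,k)=1$), let $k'$ be the largest row index with $k'>k$ and $\mathbf{L}(k',k)=1$; then $d_{down}(k)=k'-k$. *)

From mathcomp Require Import all_boot all_order all_algebra.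
Set Implicit Arguments. Unset Strict Implicit. Unset Printing Implicit Defensive.

(* Euclidean-division sequence.  State n = (lambda_{n-1}, lambda_n), n >= 0.
   Once a zero is reached, the sequence stays 0 (convention lambda_j = 0, j > l). *)
Definition air_step (p : nat * nat) : nat * nat :=
  if p.2 == 0 then (0, 0) else (p.2, p.1 %% p.2).

Definition air_state (K D n : nat) : nat * nat := iter n air_step (K - D, D).

(* lamS K D n = lambda_{n-1}   (so lamS K D 0 = lambda_{-1} = K - D,
   lamS K D 1 = lambda_0 = D, ...) *)
Definition lamS (K D n : nat) : nat := (air_state K D n).1.

(* beta K D i = beta_i  (i >= 0): lambda_{i-1} = beta_i lambda_i + lambda_{i+1};
   beta_i = 0 when lambda_i = 0. *)
Definition beta (K D i : nat) : nat :=
  if lamS K D i.+1 == 0 then 0 else lamS K D i %/ lamS K D i.+1.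

(* l = least index j >= 0 with lambda_{j+1} = 0 (exists and is < K when 1 <= D <= K-1). *)
Definition air_l (K D : nat) : nat :=
  find (fun j => lamS K D j.+2 == 0) (iota 0 K).

Definition air_entry (K D r c : nat) : bool :=
  let l := air_l K D in
  [||
      (r < K - D) && (c == r),
      (* even submatrices I_{lambda_{2i} x beta_{2i} lambda_{2i}} *)
      has (fun i =>
        [&& 2 * i <= l, 0 < beta K D (2 * i),
            K - lamS K D (2 * i).+1 <= r, r < K,
            K - D - lamS K D (2 * i) <= c, c < K - D - lamS K D (2 * i).+2 &
            (c - (K - D - lamS K D (2 * i))) %% lamS K D (2 * i).+1
              == r - (K - lamS K D (2 * i).+1)]) (iota 0 l.+1)
    | (* odd submatrices I_{beta_{2i+1} lambda_{2i+1} x lambda_{2i+1}} *)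
      has (fun i =>
        [&& (2 * i).+1 <= l,
            K - lamS K D (2 * i).+1 <= r, r < K - lamS K D (2 * i).+3,
            K - D - lamS K D (2 * i).+2 <= c, c < K - D &
            (r - (K - lamS K D (2 * i).+1)) %% lamS K D (2 * i).+2
              == c - (K - D - lamS K D (2 * i).+2)]) (iota 0 l.+1) ].

Definition air_mx (K D : nat) : 'M[nat]_(K, K - D) :=
  \matrix_(r < K, c < K - D) nat_of_bool (air_entry K D r c).

Definition d_down (m n : nat) (L : 'M[nat]_(m, n)) (k : 'I_n) : nat :=
  (\max_(r < m | (k < r) && (L r k == 1)) r) - k.

From mathcomp Require Import all_boot all_order all_algebra.
From mathcomp Require Import ssrint zify.
Import GRing.Theory.

Set Implicit Arguments.
Unset Strict Implicit.
Unset Printing Implicit Defensive.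

(* Column k of C_i meets the identity block on the diagonal, the even block
   of index i in row K - λ_{2i} + (k_R mod λ_{2i}), and only odd blocks of
   index < i, whose rows all lie above K - λ_{2i}: the column ranges of the
   blocks are disjoint because λ is non-increasing along each parity class.
   Hence the last 1 of the column is in the even block, and the division
   λ_{2i-1} = β_{2i} λ_{2i} + λ_{2i+1} turns its row into the formula.
   When λ_{2i} = 0 there is no even block; the last 1 is then in the odd
   block of index i - 1, whose rows reach K, and as λ_{2i-1} divides
   λ_{2i-2} it lies at distance exactly D below the diagonal. *)

Lemma leq_last_residue M P x : M %| P -> x < P -> x <= P - M + x %% M.
Proof.
move=> /dvdnP [q ->] ltxP; rewrite {1}(divn_eq x M).
have : x %/ M < q.
  by case: M ltxP => [|M] ltxP; [rewrite muln0 in ltxP | rewrite ltn_divLR].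
nia.
Qed.

Lemma d_down_eq m n (L : 'M[nat]_(m, n)) (k : 'I_n) (r0 : 'I_m) :
  k < r0 -> L r0 k = 1 -> (forall r : 'I_m, k < r -> L r k = 1 -> r <= r0) ->
  d_down L k = r0 - k.
Proof.
move=> ltkr0 Lr0 r0_max; congr (_ - _); apply/eqP; rewrite eqn_leq.
apply/andP; split; first by apply/bigmax_leqP => r /andP [ltkr /eqP Lr]; apply: r0_max.
by apply: (@leq_bigmax_cond _ _ (fun r : 'I_m => nat_of_ord r) r0); rewrite ltkr0 Lr0 /=.
Qed.

Section EuclideanSequence.
Variables K D : nat.
Local Notation lam := (lamS K D).

Lemma air_stateS n : air_state K D n.+1 = air_step (air_state K D n).
Proof. by []. Qed.

Lemma air_stateE n : air_state K D n = (lam n, lam n.+1).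
Proof.
rewrite /lamS air_stateS.
by case: (air_state K D n) => a b; rewrite /air_step /=; case: eqP => // ->.
Qed.

Lemma lamS0 : lam 0 = K - D. Proof. by []. Qed.

Lemma lamS1 : lam 1 = D.
Proof. by rewrite /lamS /= /air_step /=; case: eqP. Qed.

Lemma lamSS n : lam n.+2 = if lam n.+1 == 0 then 0 else lam n %% lam n.+1.
Proof.
have -> : lam n.+2 = (air_state K D n.+1).2 by rewrite air_stateE.
by rewrite air_stateS air_stateE /air_step /=; case: eqP.
Qed.

Lemma lamS_ltnS n : 0 < lam n.+1 -> lam n.+2 < lam n.+1.
Proof. by move=> pos; rewrite lamSS eqn0Ngt pos ltn_pmod. Qed.

Lemma lamS_leqSS n : lam n.+2 <= lam n.
Proof. by rewrite lamSS; case: eqP => // _; apply: leq_mod. Qed.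

Lemma lamS_leqS n : lam n.+2 <= lam n.+1.
Proof.
have [lam0|pos] := posnP (lam n.+1); first by rewrite lamSS lam0.
exact/ltnW/lamS_ltnS.
Qed.

Lemma lamS_leq_parity n m : n <= m -> odd n = odd m -> lam m <= lam n.
Proof.
move=> le_nm par; have [j ->] : exists j, m = n + j.*2 by exists (m - n)./2; lia.
elim: j => [|j IH]; first by rewrite addn0.
by rewrite doubleS !addnS (leq_trans (lamS_leqSS _)).
Qed.

Lemma lamS_leq_subn n : lam n.+1 <= D - n.
Proof.
elim: n => [|n IH]; first by rewrite lamS1 subn0.
have [lam0|pos] := posnP (lam n.+1); first by rewrite lamSS lam0.
by have := lamS_ltnS pos; lia.
Qed.

Lemma lamS_succ_leq n : lam n.+1 <= D.
Proof. exact: leq_trans (lamS_leq_subn n) (leq_subr n D). Qed.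

Lemma lamS_double_leq i : lam (2 * i) <= K - D.
Proof. by rewrite -lamS0 lamS_leq_parity //; lia. Qed.

Lemma lamS_eq0_mono n m : n <= m -> lam n.+1 = 0 -> lam m.+1 = 0.
Proof.
move=> /subnKC <-; elim: (m - n) => [|j IH] lam0; first by rewrite addn0.
by rewrite addnS lamSS IH.
Qed.

Lemma lamS_edivn n : 0 < lam n.+1 -> lam n = beta K D n * lam n.+1 + lam n.+2.
Proof.
by move=> pos; rewrite /beta lamSS eqn0Ngt pos -divn_eq.
Qed.

Lemma lamS_dvdn n : 0 < lam n.+1 -> lam n.+2 = 0 -> lam n.+1 %| lam n.
Proof. by move=> pos; rewrite lamSS eqn0Ngt pos /= /dvdn => ->. Qed.

Hypotheses (hD1 : 1 <= D) (hDK : D <= K - 1).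

Lemma lamS_eq0 n : (lam n.+1 == 0) = (air_l K D < n).
Proof.
have has_zero : has (fun j => lam j.+2 == 0) (iota 0 K).
  apply/hasP; exists D.-1; first by rewrite mem_iota; lia.
  by rewrite prednK // -leqn0 -(subnn D) lamS_leq_subn.
have ltlK : air_l K D < K.
  by rewrite /air_l -[K in _ < K](size_iota 0) -has_find.
apply/idP/idP => [|ltln].
  case: n => [|n]; first by rewrite lamS1; lia.
  apply: contraLR; rewrite -leqNgt => le_nl.
  have := before_find 0 le_nl; rewrite nth_iota ?add0n //; lia.
apply/eqP; apply: (lamS_eq0_mono ltln).
by have /eqP := nth_find 0 has_zero; rewrite nth_iota.
Qed.

Lemma lamS_double_eq0 i : i <= uphalf (air_l K D) ->
  lam (2 * i).+1 = 0 <-> 2 * i = (air_l K D).+1.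
Proof. by have := lamS_eq0 (2 * i); rewrite uphalf_half; case: eqP; lia. Qed.

End EuclideanSequence.

Section AirBlocks.
Variables K D : nat.
Local Notation lam := (lamS K D).

Definition even_block (r c i : nat) : bool :=
  [&& 2 * i <= air_l K D, 0 < beta K D (2 * i),
      K - lam (2 * i).+1 <= r, r < K,
      K - D - lam (2 * i) <= c, c < K - D - lam (2 * i).+2 &
      (c - (K - D - lam (2 * i))) %% lam (2 * i).+1 == r - (K - lam (2 * i).+1)].

Definition odd_block (r c i : nat) : bool :=
  [&& (2 * i).+1 <= air_l K D,
      K - lam (2 * i).+1 <= r, r < K - lam (2 * i).+3,
      K - D - lam (2 * i).+2 <= c, c < K - D &
      (r - (K - lam (2 * i).+1)) %% lam (2 * i).+2 == c - (K - D - lam (2 * i).+2)].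

Lemma even_block_air_entry r c i : even_block r c i -> air_entry K D r c.
Proof.
move=> blk; apply/orP; right; apply/orP; left; apply/hasP; exists i => //.
by move: blk => /andP [le_il _]; rewrite mem_iota; lia.
Qed.

Lemma odd_block_air_entry r c i : odd_block r c i -> air_entry K D r c.
Proof.
move=> blk; apply/orP; right; apply/orP; right; apply/hasP; exists i => //.
by move: blk => /andP [le_il _]; rewrite mem_iota; lia.
Qed.

Lemma air_entry_below_diag r c : c < r -> air_entry K D r c ->
  (exists i, even_block r c i) \/ (exists i, odd_block r c i).
Proof.
move=> ltcr /or3P [/andP [_ /eqP eq_cr]|/hasP [i _ blk]|/hasP [i _ blk]].
- by rewrite eq_cr ltnn in ltcr.
- by left; exists i.
- by right; exists i.
Qed.

Lemma even_block_col i i' r k :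
  K - D - lam (2 * i) <= k < K - D - lam (2 * i).+2 ->
  even_block r k i' -> i' = i.
Proof.
move=> /andP [lek ltk] /and4P [_ _ _ /and4P [_ lek' ltk' _]].
have [lt_ii'|lt_i'i|//] := ltngtP i i'.
  have := @lamS_leq_parity K D (2 * i).+2 (2 * i'); lia.
have := @lamS_leq_parity K D (2 * i').+2 (2 * i); lia.
Qed.

Lemma odd_block_col i j r k :
  k < K - D - lam (2 * i).+2 -> odd_block r k j -> j < i.
Proof.
move=> ltk /and4P [_ _ _ /and3P [lek _ _]]; rewrite ltnNge; apply/negP => le_ij.
have := @lamS_leq_parity K D (2 * i).+2 (2 * j).+2; lia.
Qed.

Lemma even_block_rowE i r k : even_block r k i ->
  r = K - lam (2 * i).+1 + (k - (K - D - lam (2 * i))) %% lam (2 * i).+1.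
Proof. by case/and4P=> _ _ le_r /and4P [_ _ _ /eqP ->]; rewrite subnKC. Qed.

Lemma odd_block_row_lt i j r k : j < i -> odd_block r k j -> r < K - lam (2 * i).+1.
Proof.
move=> lt_ji /and4P [_ _ ltr _]; apply: (leq_trans ltr).
by rewrite leq_sub2l // lamS_leq_parity //; lia.
Qed.

End AirBlocks.

Lemma d_down_air K D (k : 'I_(K - D)) r0 :
  r0 < K -> k < r0 -> air_entry K D r0 k ->
  (forall r, r < K -> k < r -> air_entry K D r k -> r <= r0) ->
  d_down (air_mx K D) k = r0 - k.
Proof.
move=> ltr0K ltkr0 Lr0 r0_max; apply: (@d_down_eq _ _ _ _ (Ordinal ltr0K)) => //=.
  by rewrite mxE Lr0.
by move=> r ltkr; rewrite mxE; case: air_entry (r0_max r (ltn_ord r) ltkr) => // ->.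
Qed.

Section DownDistance.
Variables K D : nat.
Hypotheses (hD1 : 1 <= D) (hDK : D <= K - 1).
Local Notation lam := (lamS K D).

Lemma even_block_row i k :
  0 < lam (2 * i).+1 -> K - D - lam (2 * i) <= k < K - D - lam (2 * i).+2 ->
  even_block K D
    (K - lam (2 * i).+1 + (k - (K - D - lam (2 * i))) %% lam (2 * i).+1) k i.
Proof.
move=> pos /andP [lek ltk]; have ediv := lamS_edivn pos.
have le_il : 2 * i <= air_l K D by rewrite leqNgt -lamS_eq0 // -lt0n.
have beta_pos : 0 < beta K D (2 * i) by case: beta ediv => // ediv; lia.
have le_mK : lam (2 * i).+1 <= K by have := lamS_succ_leq K D (2 * i); lia.
have := ltn_pmod (k - (K - D - lam (2 * i))) pos.
rewrite /even_block le_il beta_pos lek ltk addKn leq_addr eqxx /= andbT; lia.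
Qed.

Lemma odd_block_last_row j k :
  air_l K D = (2 * j).+1 -> K - D - lam (2 * j).+2 <= k < K - D ->
  odd_block K D (K - lam (2 * j).+2 + (k - (K - D - lam (2 * j).+2))) k j.
Proof.
move=> eq_l /andP [lek ltk].
have pos : 0 < lam (2 * j).+2 by rewrite lt0n lamS_eq0 // eq_l ltnn.
have lam3 : lam (2 * j).+3 = 0 by apply/eqP; rewrite lamS_eq0 // eq_l.
have le_MP := lamS_leqS K D (2 * j).
have le_PK : lam (2 * j).+1 <= K by have := lamS_succ_leq K D (2 * j); lia.
rewrite /odd_block eq_l lam3 lek ltk subn0 leqnn /=.
apply/and3P; split; [lia | lia | apply/eqP].
set co := k - _; have -> : K - lam (2 * j).+2 + co - (K - lam (2 * j).+1) =
  lam (2 * j).+1 - lam (2 * j).+2 + co by lia.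
rewrite -modnDml.
have /eqP -> := dvdn_sub (lamS_dvdn pos lam3) (dvdnn (lam (2 * j).+2)).
by rewrite modn_small //; lia.
Qed.

Lemma odd_block_last_row_max j r k :
  air_l K D = (2 * j).+1 -> odd_block K D r k j ->
  r <= K - lam (2 * j).+2 + (k - (K - D - lam (2 * j).+2)).
Proof.
move=> eq_l /and4P [_ le_r ltr /and3P [_ _ /eqP eq_mod]].
have pos : 0 < lam (2 * j).+2 by rewrite lt0n lamS_eq0 // eq_l ltnn.
have lam3 : lam (2 * j).+3 = 0 by apply/eqP; rewrite lamS_eq0 // eq_l.
have le_MP := lamS_leqS K D (2 * j).
have le_PK : lam (2 * j).+1 <= K by have := lamS_succ_leq K D (2 * j); lia.
have lt_rP : r - (K - lam (2 * j).+1) < lam (2 * j).+1.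
  by move: ltr; rewrite lam3 subn0; lia.
by have := leq_last_residue (lamS_dvdn pos lam3) lt_rP; rewrite eq_mod; lia.
Qed.

Lemma d_down_air_even i (k : 'I_(K - D)) :
  0 < lam (2 * i).+1 -> K - D - lam (2 * i) <= k < K - D - lam (2 * i).+2 ->
  d_down (air_mx K D) k =
    K - lam (2 * i).+1 + (k - (K - D - lam (2 * i))) %% lam (2 * i).+1 - k.
Proof.
move=> pos kCi; have blk := even_block_row pos kCi.
have /and4P [_ _ le_r0 /andP [ltr0K _]] := blk.
have ltk_r0 : k < K - lam (2 * i).+1.
  by have := ltn_ord k; have := lamS_succ_leq K D (2 * i); lia.
apply: d_down_air (even_block_air_entry blk) _ => //; first exact: leq_trans le_r0.
move=> r _ ltkr /(air_entry_below_diag ltkr) [[i' blk']|[j blk']].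
  have eq_i'i := even_block_col kCi blk'; subst i'.
  by rewrite (even_block_rowE blk').
case/andP: kCi => _ ltk.
exact/ltnW/(leq_trans (odd_block_row_lt (odd_block_col ltk blk') blk')).
Qed.

Lemma d_down_air_evenE i (k : 'I_(K - D)) :
  0 < lam (2 * i).+1 -> K - D - lam (2 * i) <= k < K - D - lam (2 * i).+2 ->
  let kR := k - (K - D - lam (2 * i)) in
  d_down (air_mx K D) k + (kR %/ lam (2 * i).+1).+1 * lam (2 * i).+1 =
    D + lam (2 * i).+2 + beta K D (2 * i) * lam (2 * i).+1.
Proof.
move=> pos kCi /=; rewrite (d_down_air_even pos kCi); case/andP: kCi => lek ltk.
have ediv := lamS_edivn pos; have le_eKD := lamS_double_leq K D i.
have kR_eq := divn_eq (k - (K - D - lam (2 * i))) (lam (2 * i).+1).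
have lt_qb : (k - (K - D - lam (2 * i))) %/ lam (2 * i).+1 < beta K D (2 * i).
  by rewrite ltn_divLR //; lia.
have := leq_mul lt_qb (leqnn (lam (2 * i).+1)); rewrite mulSn.
move: kR_eq ediv; move: (beta K D (2 * i) * _) (_ %/ _ * _) => bm qm; lia.
Qed.

Lemma d_down_air_last j (k : 'I_(K - D)) :
  air_l K D = (2 * j).+1 -> K - D - lam (2 * j).+2 <= k ->
  d_down (air_mx K D) k = D.
Proof.
move=> eq_l lek; have kC : K - D - lam (2 * j).+2 <= k < K - D by rewrite lek /=.
have blk := odd_block_last_row eq_l kC.
have /and4P [_ le_r0 ltr0K _] := blk.
have lam4 : lam (2 * j.+1).+2 = 0 by apply/eqP; rewrite lamS_eq0 // eq_l mulnS; lia.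
have le_MK : lam (2 * j).+2 <= K - D.
  by have := lamS_double_leq K D j.+1; rewrite mulnS add2n.
suff -> : d_down (air_mx K D) k =
  K - lam (2 * j).+2 + (k - (K - D - lam (2 * j).+2)) - k by lia.
apply: d_down_air (odd_block_air_entry blk) _; [lia | lia |].
move=> r _ ltkr /(air_entry_below_diag ltkr) [[i' blk']|[j' blk']].
  have kCj : K - D - lam (2 * j.+1) <= k < K - D - lam (2 * j.+1).+2.
    by rewrite lam4 subn0 mulnS add2n.
  have eq_i' := even_block_col kCj blk'.
  by move: blk' => /andP [+ _]; rewrite eq_i' eq_l; lia.
have : j' < j.+1 by apply: (odd_block_col _ blk'); rewrite lam4 subn0.
rewrite ltnS leq_eqVlt => /predU1P [eq_j'|lt_j'j].
  by rewrite eq_j' in blk'; apply: odd_block_last_row_max blk'.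
have := odd_block_row_lt lt_j'j blk'; lia.
Qed.

End DownDistance.

Theorem lemma1 (K D : nat) (hD1 : 1 <= D) (hDK : D <= K - 1)
  (i : nat) (hi : i <= uphalf (air_l K D))
  (k : 'I_(K - D))
  (hk1 : K - D - lamS K D (2 * i) <= k)
  (hk2 : k < K - D - lamS K D (2 * i).+2) :
  let kR := (k - (K - D - lamS K D (2 * i)))%N in
  (0 < lamS K D (2 * i).+1 ->
     forall c d : nat, kR = (c * lamS K D (2 * i).+1 + d)%N ->
       d < lamS K D (2 * i).+1 ->
       ((d_down (air_mx K D) k)%:Z =
         D%:Z + (lamS K D (2 * i).+2)%:Z
          + ((beta K D (2 * i))%:Z - 1 - c%:Z) * (lamS K D (2 * i).+1)%:Z)%R)
  /\ (lamS K D (2 * i).+1 = 0 -> d_down (air_mx K D) k = D)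
  /\ (lamS K D (2 * i).+1 = 0 <-> odd (air_l K D) /\ i = uphalf (air_l K D)).
Proof.
cbv zeta; have lam_eq0 := lamS_double_eq0 hD1 hDK hi.
split; [|split].
- move=> pos c d eq_kR lt_dm.
  have /= := d_down_air_evenE hD1 hDK pos (introT andP (conj hk1 hk2)).
  rewrite eq_kR divnMDl // divn_small // addn0 mulSn !mulrBl mul1r -!PoszM.
  by move: (d_down _ _) (beta _ _ _ * _) (c * _) => dd bm cm; lia.
- move=> /lam_eq0; case: i {hi hk2 lam_eq0} hk1 => [|j] // lek eq_l.
  rewrite mulnS add2n in lek eq_l.
  by apply: (d_down_air_last hD1 hDK (j := j)) => //; case: eq_l.
- by rewrite lam_eq0; move: hi; rewrite uphalf_half; lia.
Qed.
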